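(* Let $f,g\in\mathbb{Z}[t]$ be AC polynomials of degree $d$, with $a_j,b_j$ the coefficients of $t^j$ in $f,g$ respectively. Let $r>0$ and $\lambda$ be integers and suppose $\Lambda=f+\lambda t^{d+1}A_r+t^{d+r+1}g$ is an AC polynomial, with $|a_j|<|a_{j+1}|<|\lambda|$ and $|\lambda|>|b_j|>|b_{j+1}|$ for all $j$. Then for every integer $y$ with $1\le y\le r$, $\Lambda A_y$ is an AC polynomial with the same properties as $\Lambda$; namely $$\Lambda A_y=f_y+\lambda_y t^{d+y}A_{r-y+1}+t^{d+r+1}g_y,$$ where $f_y,g_y$ are AC polynomials of degree $d+y-1$ and $\lambda_y=-\epsilon_y\,y\,\lambda$. The absolute values of the coefficients of $f_y$ are monotonically increasing, those of $g_y$ monotonically decreasing, and all are less than $|\lambda_y|$. Furthermore, the coefficients of $f_y$ depend on the parity of $r$ but not on the actual value of $r$, and the coefficients of $g_y$ are independent of $r$.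
   Context: $\epsilon_x=(-1)^x$. For an integer $w$, $A_w=(t^w+\epsilon_{w-1})/(t+1)$; for $w>0$, $A_w=\sum_{j=0}^{w-1}\epsilon_jt^{w-1-j}$. For $f\in\mathbb{Z}[t]$ write $[f]_j$ for the coefficient of $t^j$. An AC (alternating coefficient) polynomial is a nonzero $f\in\mathbb{Z}[t]$ with $[f]_j[f]_{j+1}<0$ for all $j$ with $\min\deg f\le j<\deg f$ (where $\min\deg f$ is the lowest degree of a nonzero term). *)

From mathcomp Require Import all_boot all_order all_algebra.
Set Implicit Arguments. Unset Strict Implicit. Unset Printing Implicit Defensive.
Import Order.TTheory GRing.Theory Num.Theory.
Local Open Scope ring_scope.

Definition eps (x : nat) : int := (-1) ^+ x.

Definition Apoly (w : nat) : {poly int} :=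
  \sum_(j < w) (eps j)%:P * 'X^(w.-1 - j).

Definition mindeg (p : {poly int}) : nat := find (fun c : int => c != 0) p.

Definition degp (p : {poly int}) : nat := (size p).-1.

Definition ACpoly (p : {poly int}) : Prop :=
  p != 0 /\ forall j : nat, (mindeg p <= j)%N -> (j < degp p)%N -> p`_j * p`_j.+1 < 0.

Definition Lam (d : nat) (f g : {poly int}) (lam : int) (r : nat) : {poly int} :=
  f + lam%:P * 'X^(d.+1) * Apoly r + 'X^((d + r).+1) * g.

From mathcomp Require Import all_boot all_order all_algebra.
From mathcomp Require Import zify ring.
Import Order.TTheory GRing.Theory Num.Theory.
Local Open Scope ring_scope.

(* An AC polynomial p is, up to one global sign, p_n = (-1)^n |p_n| with |p_n| > 0
   exactly on the interval [mindeg p, degp p].  Multiplying by A_y convolves with the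
   alternating signs of A_y, which line up with those of p: the n-th coefficient of
   p A_y is +-(-1)^n times the window sum |p_(n-y+1)| + ... + |p_n|, so p A_y is again AC.
   The coefficients of f_y and g_y are such window sums for Lambda, and two consecutive
   windows differ by one entering and one leaving coefficient.  Since |Lambda_m| rises
   strictly through f, stays equal to |lambda| on the middle block and falls strictly
   through g, this gives the monotonicity of f_y and g_y and the bound y |lambda|.  On the
   middle block all y terms are equal, which produces lambda_y, and r enters the low
   (resp. high) windows only through the parity of r (resp. a translation). *)

Lemma epsS n : eps n.+1 = - eps n.
Proof. by rewrite /eps exprS mulN1r. Qed.

Lemma epsD m n : eps (m + n) = eps m * eps n.
Proof. by rewrite /eps exprD. Qed.

Lemma eps_odd m n : odd m = odd n -> eps m = eps n.
Proof. by move=> e; rewrite /eps -[LHS]signr_odd e signr_odd. Qed.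

Lemma normr_eps n : `|eps n| = 1.
Proof. by rewrite /eps normrX normrN1 expr1n. Qed.

Lemma eps_sign n : eps n = 1 \/ eps n = -1.
Proof. by rewrite /eps -signr_odd; case: (odd n); [right | left]. Qed.

Lemma coef_Apoly w k : (Apoly w)`_k = if (k < w)%N then eps (w.-1 - k) else 0.
Proof.
rewrite /Apoly coef_sum.
under eq_bigr => j _ do rewrite coefCM coefXn.
case: ifP => kw.
  have jw : (w.-1 - k < w)%N by lia.
  rewrite (bigD1 (Ordinal jw)) //= big1 ?addr0.
    by rewrite (_ : (k == w.-1 - (w.-1 - k))%N = true) ?mulr1 //; apply/eqP; lia.
  move=> j /eqP jk; case: eqP => e; last by rewrite mulr0.
  by case: jk; apply: val_inj => /=; have := ltn_ord j; lia.
by rewrite big1 // => j _; case: eqP => e; [have := ltn_ord j; lia | rewrite mulr0].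
Qed.

Lemma coef_mul_Apoly p y n : (p * Apoly y)`_n =
  \sum_(n.+1 - y <= j < n.+1) eps (y.-1 - (n - j)) * p`_j.
Proof.
rewrite coefM -(big_mkord xpredT (fun j => p`_j * (Apoly y)`_(n - j))).
rewrite (big_cat_nat _ (leq_subr y n.+1)) //=.
rewrite big_nat_cond big1 ?add0r => [|j /andP [/andP [_ jn] _]]; last first.
  by rewrite coef_Apoly ifF ?mulr0 //; lia.
apply: eq_big_nat => j /andP [jlo jhi].
by rewrite coef_Apoly ifT 1?mulrC //; lia.
Qed.

Lemma coef_mul_Apoly_eq (p q : {poly int}) y n : (forall j, (j <= n)%N -> p`_j = q`_j) ->
  (p * Apoly y)`_n = (q * Apoly y)`_n.
Proof. by move=> pq; rewrite !coef_mul_Apoly; apply: eq_big_nat => j jn; rewrite pq //; lia. Qed.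

Lemma coef_mul_Apoly_translate (p q : {poly int}) a b y n :
  (forall j, p`_(j + a) = q`_(j + b)) -> (y <= n.+1)%N ->
  (p * Apoly y)`_(n + a) = (q * Apoly y)`_(n + b).
Proof.
move=> pq yn; have shift c (r : {poly int}) : (r * Apoly y)`_(n + c) =
    \sum_(n.+1 - y <= j < n.+1) eps (y.-1 - (n - j)) * r`_(j + c).
  rewrite coef_mul_Apoly (_ : ((n + c).+1 - y = n.+1 - y + c)%N); last lia.
  rewrite -addSn big_addn addnK; apply: eq_big_nat => j _; congr (eps _ * _); lia.
by rewrite !shift; apply: eq_bigr => j _; rewrite pq.
Qed.

Lemma coef_lt_mindeg (p : {poly int}) n : (n < mindeg p)%N -> p`_n = 0.
Proof. by move=> /(before_find 0) /negbFE /eqP. Qed.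

Lemma mindeg_eq (p : {poly int}) a :
  p`_a != 0 -> (forall j, (j < a)%N -> p`_j = 0) -> mindeg p = a.
Proof.
move=> pa0 below; apply/eqP; rewrite eqn_leq; apply/andP; split.
  by rewrite leqNgt; apply: contra pa0 => /coef_lt_mindeg ->.
rewrite leqNgt; apply/negP => lt_m_a.
have : (mindeg p < size p)%N.
  by apply: (@ltn_trans a) => //; rewrite ltnNge; apply: contra pa0 => /leq_sizeP ->.
by rewrite /mindeg -has_find => /(nth_find 0) /=; rewrite -/(mindeg p) below.
Qed.

Lemma degp_eq (p : {poly int}) b :
  p`_b != 0 -> (forall j, (b < j)%N -> p`_j = 0) -> degp p = b.
Proof.
move=> pb0 above; rewrite /degp; apply/eqP; rewrite -eqSS prednK; last first.
  by apply: (@leq_ltn_trans b) => //; rewrite ltnNge; apply: contra pb0 => /leq_sizeP ->.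
rewrite eqn_leq; apply/andP; split; first by apply/leq_sizeP.
by rewrite ltnNge; apply: contra pb0 => /leq_sizeP ->.
Qed.

Lemma ACpoly_support {p : {poly int}} :
  ACpoly p -> forall n, (p`_n != 0) = (mindeg p <= n <= degp p)%N.
Proof.
case=> p0 hac n; case: (ltnP n (mindeg p)) => lo /=.
  by rewrite coef_lt_mindeg ?eqxx.
case: (ltnP (degp p) n) => hi.
  by rewrite nth_default ?eqxx; move: hi; rewrite /degp; case: (size p).
case: (ltngtP n (degp p)) hi => // [lt _ | -> _].
  by apply: contraTneq (hac n lo lt) => ->; rewrite mul0r ltxx.
by rewrite -lead_coefE lead_coef_eq0.
Qed.

Lemma coef_degp_neq0 {p : {poly int}} : ACpoly p -> p`_(degp p) != 0.
Proof. by case=> p0 _; rewrite -lead_coefE lead_coef_eq0. Qed.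

Lemma mindeg_le_degp {p : {poly int}} : ACpoly p -> (mindeg p <= degp p)%N.
Proof.
by move=> pAC; have := ACpoly_support pAC (degp p); rewrite leqnn andbT coef_degp_neq0.
Qed.

Definition alternating (p : {poly int}) (s : nat) : Prop :=
  forall n, p`_n = eps (n + s) * `|p`_n|.

Lemma eps_alternate (x z : int) k : x * z < 0 -> x = eps k * `|x| -> z = eps k.+1 * `|z|.
Proof. by rewrite epsS; case: (eps_sign k) => -> /=; nia. Qed.

Lemma ACpoly_alternating {p : {poly int}} : ACpoly p -> exists s, alternating p s.
Proof.
move=> pAC; have supp := ACpoly_support pAC; case: pAC => _ hac.
set m := mindeg p in hac supp *.
exists (m + (p`_m < 0)%R)%N => n.
case: (ltnP n m) => [lo | /subnK <-]; first by rewrite coef_lt_mindeg // normr0 mulr0.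
elim: (n - m)%N => [|k IH].
  rewrite add0n (@eps_odd _ (p`_m < 0)%R); last by rewrite addnA oddD addnn odd_double.
  case: ltrP => [/ltr0_norm | /ger0_norm] ->;
  by rewrite /eps ?expr1 ?expr0 ?mulN1r ?opprK ?mul1r.
case: (leqP (k.+1 + m) (degp p)) => hi; last first.
  move: (supp (k.+1 + m)); rewrite [(_ <= degp p)%N]leqNgt hi andbF => /negbFE/eqP ->.
  by rewrite normr0 mulr0.
by rewrite !addSn; apply: eps_alternate (IH); apply: hac; lia.
Qed.

Lemma alternating_ACpoly (p : {poly int}) s a b :
  alternating p s -> (a <= b)%N -> (forall n, (p`_n != 0) = (a <= n <= b)%N) ->
  [/\ ACpoly p, mindeg p = a & degp p = b].
Proof.
move=> alt ab supp.
have pa0 : p`_a != 0 by rewrite supp leqnn ab.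
have mp : mindeg p = a.
  by apply: mindeg_eq pa0 _ => j ja; apply/eqP/negbNE; rewrite supp leqNgt ja.
have dp : degp p = b.
  apply: degp_eq => [|j bj]; first by rewrite supp ab leqnn.
  by apply/eqP/negbNE; rewrite supp [(j <= b)%N]leqNgt bj andbF.
split=> //; split; first by apply: contraNneq pa0 => ->; rewrite coef0.
rewrite mp dp => j aj jb; rewrite [p`_j]alt [p`_j.+1]alt addSn epsS.
have pj : 0 < `|p`_j| by rewrite normr_gt0 supp aj ltnW.
have pj1 : 0 < `|p`_j.+1| by rewrite normr_gt0 supp jb leqW.
by case: (eps_sign (j + s)) => ->; nia.
Qed.

(* Sum of the |p_j| for the last y indices j <= n; only n + 1 terms when n < y. *)
Definition window (p : {poly int}) (y n : nat) : int := \sum_(n.+1 - y <= j < n.+1) `|p`_j|.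

Lemma window_ge0 (p : {poly int}) y n : 0 <= window p y n.
Proof. by apply: sumr_ge0 => j _; apply: normr_ge0. Qed.

Lemma window_succ (p : {poly int}) y n : window p y.+1 n.+1 = window p y n + `|p`_n.+1|.
Proof. by rewrite /window subSS big_nat_recr //= leq_subr. Qed.

Lemma window_succl (p : {poly int}) y n :
  window p y.+1 n = (if (y <= n)%N then `|p`_(n - y)| else 0) + window p y n.
Proof.
rewrite /window subSS; case: leqP => yn; first by rewrite big_ltn ?subSn //; lia.
by rewrite add0r (_ : (n - y = n.+1 - y)%N) //; lia.
Qed.

Lemma window_le (p : {poly int}) y n K :
  (forall j, `|p`_j| <= K) -> window p y n <= K * y%:R.
Proof.
move=> pK; have K0 : 0 <= K := le_trans (normr_ge0 _) (pK 0%N).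
elim: y => [|y IH]; first by rewrite /window subn0 big_geq ?mulr0.
rewrite window_succl -natr1; have : (if (y <= n)%N then `|p`_(n - y)| else 0) <= K.
  by case: ifP.
lia.
Qed.

Lemma window_gt0 {p : {poly int}} y n : ACpoly p -> (0 < y)%N ->
  (0 < window p y n) = (mindeg p <= n <= degp p + y.-1)%N.
Proof.
move=> pAC y0; have supp := ACpoly_support pAC; have md := mindeg_le_degp pAC.
have jP j : reflect (n.+1 - y <= j < n.+1)%N (j \in index_iota (n.+1 - y) n.+1).
  by rewrite mem_index_iota; apply: idP.
case: (boolP (mindeg p <= n <= _)%N) => hn.
  have jin : minn n (degp p) \in index_iota (n.+1 - y) n.+1 by apply/jP; lia.
  rewrite /window (bigD1_seq _ jin (iota_uniq _ _)) /=.
  apply: lt_le_trans (_ : 0 < `|p`_(minn n (degp p))|) _.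
    by rewrite normr_gt0 supp; lia.
  by rewrite lerDl; apply: sumr_ge0 => j _; apply: normr_ge0.
rewrite /window big1_seq ?ltxx // => j /andP[_ /jP jr]; apply/eqP; rewrite normr_eq0.
by apply/negbNE; rewrite supp; lia.
Qed.

Lemma coef_mul_Apoly_alternating {p : {poly int}} {s : nat} y n : alternating p s ->
  (p * Apoly y)`_n = eps (n + (s + y.-1)) * window p y n.
Proof.
move=> alt; rewrite coef_mul_Apoly /window mulr_sumr; apply: eq_big_nat => j jr.
by rewrite {1}alt mulrA -epsD; congr (_ * _); apply: eps_odd; lia.
Qed.

Lemma abs_coef_mul_Apoly {p : {poly int}} y n : ACpoly p ->
  `|(p * Apoly y)`_n| = window p y n.
Proof.
case/ACpoly_alternating=> s alt.
rewrite (coef_mul_Apoly_alternating _ _ alt) normrM normr_eps mul1r.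
by rewrite ger0_norm ?window_ge0.
Qed.

Lemma ACpoly_mul_Apoly {p : {poly int}} y : ACpoly p -> (0 < y)%N ->
  [/\ ACpoly (p * Apoly y), mindeg (p * Apoly y) = mindeg p
    & degp (p * Apoly y) = (degp p + y.-1)%N].
Proof.
move=> pAC y0; have [s alt] := ACpoly_alternating pAC.
apply: (@alternating_ACpoly _ (s + y.-1)) => [n | | n].
- by rewrite abs_coef_mul_Apoly // (coef_mul_Apoly_alternating _ _ alt).
- by have := mindeg_le_degp pAC; lia.
by rewrite -normr_gt0 abs_coef_mul_Apoly // window_gt0.
Qed.

Definition segment (p : {poly int}) (k m : nat) : {poly int} := \poly_(i < m) p`_(i + k).

Lemma coef_segment (p : {poly int}) k m i :
  (segment p k m)`_i = if (i < m)%N then p`_(i + k) else 0.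
Proof. exact: coef_poly. Qed.

Lemma ACpoly_segment {p : {poly int}} k m : ACpoly p -> (0 < m)%N ->
  (mindeg p < k + m <= (degp p).+1)%N ->
  ACpoly (segment p k m) /\ degp (segment p k m) = m.-1.
Proof.
move=> pAC m0 km; have [s alt] := ACpoly_alternating pAC; have supp := ACpoly_support pAC.
case: (@alternating_ACpoly (segment p k m) (k + s) (mindeg p - k) m.-1)
  => [i | | i | qAC _ ->] //.
- rewrite coef_segment; case: ifP => _; last by rewrite normr0 mulr0.
  by rewrite {1}alt addnA.
- lia.
by rewrite coef_segment; case: ifP => im; [rewrite supp | rewrite eqxx]; lia.
Qed.

Lemma abs_coef_increasing {p : {poly int}} {d : nat} :
  (forall j, (j < d)%N -> `|p`_j| < `|p`_j.+1|) ->
  forall i m, (i < m)%N -> (m <= d)%N -> `|p`_i| < `|p`_m|.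
Proof.
move=> incr i m im md.
apply: (@homo_ltn_in _ [pred k | (k <= d)%N] (fun k => `|p`_k|) (fun x z => x < z)) => //.
- exact: lt_trans.
- by move=> a b _; rewrite inE => bd k; rewrite inE; lia.
- by move=> k; rewrite !inE => _ kd; apply: incr.
- by rewrite inE; lia.
Qed.

Lemma abs_coef_decreasing {p : {poly int}} {d : nat} : (size p <= d.+1)%N ->
  (forall j, (j < d)%N -> `|p`_j.+1| < `|p`_j|) ->
  forall i m, (i < m)%N -> (i < d)%N -> `|p`_m| < `|p`_i|.
Proof.
move=> sp decr.
have lt_in a b : (a < b)%N -> (b <= d)%N -> `|p`_b| < `|p`_a|.
  move=> ab bd.
  apply: (@homo_ltn_in _ [pred k | (k <= d)%N] (fun k => `|p`_k|) (fun x z => z < x)) => //.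
  - by move=> x z w zx wz; apply: lt_trans wz zx.
  - by move=> a' b' _; rewrite inE => hb k; rewrite inE; lia.
  - by move=> k; rewrite !inE => _ kd; apply: decr.
  - by rewrite inE; lia.
move=> i m im id; case: (leqP m d) => md; first exact: lt_in.
rewrite nth_default ?normr0; last exact: leq_trans sp _.
by apply: le_lt_trans (normr_ge0 p`_d) _; apply: lt_in.
Qed.

Lemma coef_Lam (d : nat) (f g : {poly int}) (lam : int) (r m : nat) :
  (Lam d f g lam r)`_m =
  f`_m + (if (m < d.+1)%N then 0 else
           if (m - d.+1 < r)%N then lam * eps (r.-1 - (m - d.+1)) else 0)
  + (if (m < (d + r).+1)%N then 0 else g`_(m - (d + r).+1)).
Proof.
rewrite /Lam !coefD -mulrA coefCM !coefXnM coef_Apoly.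
by case: ifP => _; rewrite ?mulr0 //; case: ifP => _; rewrite ?mulr0.
Qed.

Lemma coef_Lam_low (d : nat) (f g : {poly int}) (lam : int) (r m : nat) :
  (m <= d)%N -> (Lam d f g lam r)`_m = f`_m.
Proof. by move=> md; rewrite coef_Lam !ifT ?addr0 //; lia. Qed.

Lemma mindeg_Lam_le (d : nat) (f g : {poly int}) (lam : int) (r : nat) :
  f`_d != 0 -> (mindeg (Lam d f g lam r) <= d)%N.
Proof.
move=> fd; rewrite leqNgt; apply: contra fd => /coef_lt_mindeg.
by rewrite coef_Lam_low // => ->.
Qed.

Section LamCoefficients.

Context {d : nat} {f g : {poly int}} {lam : int}.
Hypothesis sf : (size f <= d.+1)%N.

Lemma coef_Lam_mid r m :
  (d < m <= d + r)%N -> (Lam d f g lam r)`_m = lam * eps (d + r - m).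
Proof.
move=> mr; rewrite coef_Lam nth_default; last by apply: leq_trans sf _; lia.
by rewrite ifF ?ifT ?add0r ?addr0; [congr (_ * eps _) | ..]; lia.
Qed.

Lemma coef_Lam_high r m : (d + r < m)%N -> (Lam d f g lam r)`_m = g`_(m - (d + r).+1).
Proof.
move=> rm; rewrite coef_Lam nth_default; last by apply: leq_trans sf _; lia.
by rewrite !ifF ?add0r //; lia.
Qed.

Lemma coef_Lam_shift r r' y j : (y <= r)%N -> (y <= r')%N ->
  (Lam d f g lam r)`_(j + (d + r.+1 - y)) = (Lam d f g lam r')`_(j + (d + r'.+1 - y)).
Proof.
move=> yr yr'; case: (ltnP j y) => jy.
  by rewrite !coef_Lam_mid; [congr (_ * eps _) | ..]; lia.
by rewrite !coef_Lam_high; [congr g`_ _ | ..]; lia.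
Qed.

Lemma coef_Lam_parity r r' m : odd r = odd r' -> (m <= d + r)%N -> (m <= d + r')%N ->
  (Lam d f g lam r)`_m = (Lam d f g lam r')`_m.
Proof.
move=> rr' mr mr'; case: (leqP m d) => md; first by rewrite !coef_Lam_low.
by rewrite !coef_Lam_mid; [congr (_ * _); apply: eps_odd | ..]; lia.
Qed.

Lemma degp_Lam r : (size g <= d.+1)%N -> g`_d != 0 ->
  degp (Lam d f g lam r) = ((d + r).+1 + d)%N.
Proof.
move=> sg gd; apply: degp_eq => [|j jD]; first by rewrite coef_Lam_high ?addKn //; lia.
rewrite coef_Lam_high; last lia.
by rewrite nth_default //; apply: leq_trans sg _; lia.
Qed.

Lemma coef_Lam_mul_Apoly_mid r y n : (0 < y)%N -> (d + y <= n <= d + r)%N ->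
  (Lam d f g lam r * Apoly y)`_n = - (eps y * y%:R * lam) * eps (r - y - (n - (d + y))).
Proof.
move=> y0 nr; rewrite coef_mul_Apoly.
transitivity (\sum_(n.+1 - y <= j < n.+1) lam * eps (y.-1 + (d + r - n))).
  apply: eq_big_nat => j jr; rewrite coef_Lam_mid; last lia.
  by rewrite mulrCA -epsD; congr (_ * _); apply: eps_odd; lia.
rewrite sumr_const_nat (_ : (n.+1 - (n.+1 - y) = y)%N); last lia.
have -> : eps (y.-1 + (d + r - n)) = - (eps y * eps (r - y - (n - (d + y)))).
  by rewrite -epsD -epsS; apply: eps_odd; lia.
by rewrite -mulr_natr; ring.
Qed.

Lemma coef_Lam_mul_Apoly_top r y n :
  (size g <= d.+1)%N -> ((d + r).+1 + d + y <= n)%N ->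
  (Lam d f g lam r * Apoly y)`_n = 0.
Proof.
move=> sg nD; rewrite coef_mul_Apoly big_nat_cond big1 // => j /andP[jr _].
rewrite coef_Lam_high; last lia.
by rewrite nth_default ?mulr0 //; apply: leq_trans sg _; lia.
Qed.

Lemma Lam_mul_Apoly_decomp r y : (size g <= d.+1)%N -> (0 < y <= r)%N ->
  Lam d f g lam r * Apoly y =
    segment (Lam d f g lam r * Apoly y) 0 (d + y)
  + (- (eps y * y%:R * lam))%:P * 'X^(d + y) * Apoly (r - y).+1
  + 'X^((d + r).+1) * segment (Lam d f g lam r * Apoly y) (d + r).+1 (d + y).
Proof.
move=> sg yr; apply/polyP => n.
rewrite !coefD -mulrA coefCM !coefXnM !coef_segment coef_Apoly addn0.
case: (ltnP n (d + y)) => [low | high] /=.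
  by rewrite ifT ?mulr0 ?addr0 //; lia.
case: (ltnP n (d + r).+1) => [mid | top] /=.
  by rewrite ifT ?coef_Lam_mul_Apoly_mid ?add0r ?addr0 //=; lia.
rewrite ifF ?mulr0 ?add0r; last lia.
case: ifP => [_ | /negbT]; first by rewrite subnK.
by rewrite -leqNgt => nD; apply: coef_Lam_mul_Apoly_top; lia.
Qed.

Lemma segment_Lam_mul_Apoly_high r r' y : (y <= r)%N -> (y <= r')%N ->
  segment (Lam d f g lam r * Apoly y) (d + r).+1 (d + y)
  = segment (Lam d f g lam r' * Apoly y) (d + r').+1 (d + y).
Proof.
move=> yr yr'; apply/polyP => k; rewrite !coef_segment; case: ifP => // _.
rewrite (_ : (k + (d + r).+1 = k + y + (d + r.+1 - y))%N); last lia.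
rewrite (_ : (k + (d + r').+1 = k + y + (d + r'.+1 - y))%N); last lia.
by apply: coef_mul_Apoly_translate => [j|]; [apply: coef_Lam_shift | lia].
Qed.

Lemma segment_Lam_mul_Apoly_low r r' y : odd r = odd r' -> (y <= r)%N -> (y <= r')%N ->
  segment (Lam d f g lam r * Apoly y) 0 (d + y)
  = segment (Lam d f g lam r' * Apoly y) 0 (d + y).
Proof.
move=> rr' yr yr'; apply/polyP => n; rewrite !coef_segment; case: ifP => // ny.
by apply: coef_mul_Apoly_eq => j jn; apply: coef_Lam_parity; lia.
Qed.

End LamCoefficients.

Section LamUnimodal.

Context {d : nat} {f g : {poly int}} {lam : int} {r : nat}.
Hypotheses (sf : (size f <= d.+1)%N) (sg : (size g <= d.+1)%N).
Hypothesis f_incr : forall j, (j < d)%N -> `|f`_j| < `|f`_j.+1|.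
Hypothesis g_decr : forall j, (j < d)%N -> `|g`_j| > `|g`_j.+1|.
Hypothesis lam_bound : forall j, (j <= d)%N -> `|f`_j| < `|lam| /\ `|g`_j| < `|lam|.

Local Notation c := (Lam d f g lam r).

Lemma normr_lam_gt0 : 0 < `|lam|.
Proof. by have [f0 _] := @lam_bound 0%N (leq0n d); apply: le_lt_trans f0. Qed.

Lemma abs_coef_Lam_lt_low m : (m <= d)%N -> `|c`_m| < `|lam|.
Proof. by move=> md; rewrite coef_Lam_low //; have [] := lam_bound _ md. Qed.

Lemma abs_coef_Lam_lt_high m : (d + r < m)%N -> `|c`_m| < `|lam|.
Proof.
move=> rm; rewrite coef_Lam_high //; case: (leqP (m - (d + r).+1) d) => md.
  by have [] := lam_bound _ md.
by rewrite nth_default ?normr0 ?normr_lam_gt0 //; apply: leq_trans sg _.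
Qed.

Lemma abs_coef_Lam_le m : `|c`_m| <= `|lam|.
Proof.
case: (leqP m d) => [md | dm]; first exact/ltW/abs_coef_Lam_lt_low.
case: (leqP m (d + r)) => [mr | rm]; last exact/ltW/abs_coef_Lam_lt_high.
by rewrite coef_Lam_mid ?normrM ?normr_eps ?mulr1 //; lia.
Qed.

Lemma abs_coef_Lam_rising i m : (i <= d)%N -> (i < m <= d + r)%N -> `|c`_i| < `|c`_m|.
Proof.
move=> id /andP[im mr]; rewrite coef_Lam_low //.
case: (leqP m d) => md.
  by rewrite coef_Lam_low //; exact: abs_coef_increasing f_incr _ _ im md.
rewrite coef_Lam_mid ?normrM ?normr_eps ?mulr1 //; last lia.
by have [] := lam_bound _ id.
Qed.

Lemma abs_coef_Lam_falling i m : (d < i < m)%N -> (d + r < m)%N -> (i <= d + r + d)%N ->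
  `|c`_m| < `|c`_i|.
Proof.
move=> /andP[di im] rm id; case: (leqP i (d + r)) => ir.
  rewrite [c`_i]coef_Lam_mid ?normrM ?normr_eps ?mulr1 //; last lia.
  exact: abs_coef_Lam_lt_high.
by rewrite !coef_Lam_high //; apply: (abs_coef_decreasing sg g_decr); lia.
Qed.

Lemma window_Lam_rising y j : (0 < y <= r)%N -> (j.+1 < d + y)%N ->
  window c y j < window c y j.+1.
Proof.
case: y => // y /andP[_ yr] jy.
rewrite window_succ window_succl [X in _ < X]addrC ltrD2r.
case: leqP => yj; first by apply: abs_coef_Lam_rising; lia.
by apply: le_lt_trans (normr_ge0 c`_0) _; apply: abs_coef_Lam_rising; lia.
Qed.

Lemma window_Lam_falling y k : (0 < y <= r)%N -> (k.+1 < d + y)%N ->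
  window c y (k.+1 + (d + r).+1) < window c y (k + (d + r).+1).
Proof.
case: y => // y /andP[_ yr] ky; rewrite addSn window_succ window_succl ifT; last lia.
by rewrite [X in _ < X]addrC ltrD2l; apply: abs_coef_Lam_falling; lia.
Qed.

Lemma window_Lam_lt_low y j : (0 < y)%N -> (j < d + y)%N -> window c y j < `|lam| * y%:R.
Proof.
case: y => // y _ jy; rewrite window_succl -natr1 mulrDr mulr1 addrC.
apply: ler_ltD; first by apply: window_le => m; apply: abs_coef_Lam_le.
by case: leqP => _; [apply: abs_coef_Lam_lt_low; lia | apply: normr_lam_gt0].
Qed.

Lemma window_Lam_lt_high y k : (0 < y)%N -> window c y (k + (d + r).+1) < `|lam| * y%:R.
Proof.
case: y => // y _; rewrite addnS window_succ -natr1 mulrDr mulr1.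
apply: ler_ltD; first by apply: window_le => m; apply: abs_coef_Lam_le.
by apply: abs_coef_Lam_lt_high; lia.
Qed.

End LamUnimodal.

Theorem proposition1p1 (d : nat) (f g : {poly int}) (lam : int) (r : nat) :
  ACpoly f -> ACpoly g -> degp f = d -> degp g = d ->
  (forall j : nat, (j < d)%N -> `|f`_j| < `|f`_j.+1|) ->
  (forall j : nat, (j < d)%N -> `|g`_j| > `|g`_j.+1|) ->
  (forall j : nat, (j <= d)%N -> `|f`_j| < `|lam| /\ `|g`_j| < `|lam|) ->
  (0 < r)%N -> ACpoly (Lam d f g lam r) ->
  forall y : nat, (1 <= y <= r)%N ->
    let lamy : int := - (eps y * y%:R * lam) in
    ACpoly (Lam d f g lam r * Apoly y) /\
    exists fy gy : {poly int},
      [/\ ACpoly fy, ACpoly gy, degp fy = (d + y).-1, degp gy = (d + y).-1 &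
        Lam d f g lam r * Apoly y
          = fy + lamy%:P * 'X^(d + y) * Apoly (r - y).+1 + 'X^((d + r).+1) * gy ] /\
      (forall j : nat, (j < (d + y).-1)%N -> `|fy`_j| < `|fy`_j.+1|) /\
      (forall j : nat, (j < (d + y).-1)%N -> `|gy`_j| > `|gy`_j.+1|) /\
      (forall j : nat, (j <= (d + y).-1)%N -> `|fy`_j| < `|lamy| /\ `|gy`_j| < `|lamy|) /\
      (forall r' : nat, (0 < r')%N -> (y <= r')%N -> ACpoly (Lam d f g lam r') ->
         exists fy' : {poly int},
           (size fy' <= d + y)%N /\
           Lam d f g lam r' * Apoly y
             = fy' + lamy%:P * 'X^(d + y) * Apoly (r' - y).+1 + 'X^((d + r').+1) * gy /\
           (odd r' = odd r -> fy' = fy)).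
Proof.
move=> fAC gAC df dg f_incr g_decr lam_bound _ LAC y yr lamy.
have [y0 _] := andP yr.
have sf : (size f <= d.+1)%N by rewrite -df leqSpred.
have sg : (size g <= d.+1)%N by rewrite -dg leqSpred.
set P := Lam d f g lam r * Apoly y.
have mL : (mindeg (Lam d f g lam r) <= d)%N.
  by apply: mindeg_Lam_le; rewrite -df coef_degp_neq0.
have dL : degp (Lam d f g lam r) = ((d + r).+1 + d)%N.
  by apply: degp_Lam; rewrite // -dg coef_degp_neq0.
have [PAC mP dP] := ACpoly_mul_Apoly y LAC y0.
have [fyAC dfy] : ACpoly (segment P 0 (d + y)) /\ degp (segment P 0 (d + y)) = (d + y).-1.
  by apply: ACpoly_segment; rewrite ?mP ?dP //; lia.
have [gyAC dgy] : ACpoly (segment P (d + r).+1 (d + y)) /\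
                  degp (segment P (d + r).+1 (d + y)) = (d + y).-1.
  by apply: ACpoly_segment; rewrite ?mP ?dP //; lia.
have abs_seg k i : (i < d + y)%N ->
    `|(segment P k (d + y))`_i| = window (Lam d f g lam r) y (i + k).
  by move=> iy; rewrite coef_segment iy abs_coef_mul_Apoly.
have lamyE : `|lamy| = `|lam| * y%:R.
  by rewrite normrN !normrM normr_eps normr_nat mul1r mulrC.
split=> //; exists (segment P 0 (d + y)), (segment P (d + r).+1 (d + y)).
split; first by split=> //; apply: Lam_mul_Apoly_decomp.
split; first by move=> j jy; rewrite !abs_seg ?addn0;
  [apply: (window_Lam_rising sf sg f_incr lam_bound) | ..]; lia.
split; first by move=> k ky; rewrite !abs_seg;
  [apply: (window_Lam_falling sf sg g_decr lam_bound) | ..]; lia.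
split; first by move=> j jy; rewrite lamyE !abs_seg ?addn0; [split | ..];
  [apply: (window_Lam_lt_low sf sg lam_bound) | apply: (window_Lam_lt_high sf sg lam_bound) | ..];
  lia.
move=> r' _ yr' _; exists (segment (Lam d f g lam r' * Apoly y) 0 (d + y)).
split; first exact: size_poly.
split; first by rewrite (segment_Lam_mul_Apoly_high sf r r' y);
  [apply: Lam_mul_Apoly_decomp => // | ..]; lia.
by move=> rr'; apply: segment_Lam_mul_Apoly_low => //; lia.
Qed.
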